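(* There exists a sequence of graphs $(G_n)$, defined for all sufficiently large $n$, with the following property. For all constants $\delta>0$ and $\gamma>0$: if $\mathcal C_n$ is any non-overlapping clustering of $G_n$ in which every cluster induces a subgraph of density at least $\delta$, then the fraction of maximal cliques $D$ of $G_n$ for which there is a cluster $C\in\mathcal C_n$ with $|C\cap D|\ge\gamma|D|$ tends to $0$ as $n\to\infty$.
   Context: A cluster of a graph is a nonempty vertex subset; a non-overlapping clustering is a collection of clusters in which each vertex lies in exactly one cluster. For a graph with $n'\ge 2$ vertices and $m'$ edges its density is $m'/\binom{n'}{2}$; a one-vertex graph has density $1$. A clustering partially covers a clique $D$ if some cluster contains a constant fraction of the vertices of $D$. *)

From mathcomp Require Import all_boot.
From Stdlib Require Import Reals.

Set Implicit Arguments.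
Unset Strict Implicit.
Unset Printing Implicit Defensive.

(* A graph on n vertices: vertex set 'I_n, edge relation E (assumed
   symmetric and irreflexive in the theorem). *)

Definition is_clique (n : nat) (E : rel 'I_n) (D : {set 'I_n}) : bool :=
  [forall x in D, forall y in D, (x != y) ==> E x y].

Definition is_max_clique (n : nat) (E : rel 'I_n) (D : {set 'I_n}) : bool :=
  is_clique E D && [forall D' : {set 'I_n}, (D \proper D') ==> ~~ is_clique E D'].

Definition n_edges_in (n : nat) (E : rel 'I_n) (C : {set 'I_n}) : nat :=
  #|[set p : 'I_n * 'I_n | [&& p.1 \in C, p.2 \in C, (p.1 < p.2)%N & E p.1 p.2]]|.

(* density of the induced subgraph on C: m'/binom(n',2) if n' >= 2, and 1
   for a one-vertex graph (clusters are nonempty) *)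
Definition density (n : nat) (E : rel 'I_n) (C : {set 'I_n}) : R :=
  if (2 <= #|C|)%N then (INR (n_edges_in E C) / INR 'C(#|C|, 2))%R else 1%R.

Definition Rleb (x y : R) : bool := if Rle_dec x y then true else false.

Definition frac_covered (n : nat) (E : rel 'I_n) (P : {set {set 'I_n}})
    (gamma : R) : R :=
  (INR #|[set D : {set 'I_n} | is_max_clique E D &&
           [exists C in P, Rleb (gamma * INR #|D|) (INR #|C :&: D|)]]|
   / INR #|[set D : {set 'I_n} | is_max_clique E D]|)%R.

(* G_n is a disjoint union of copies of the Hamming graph H(m, m) (words of
   length m over an m-letter alphabet, adjacent when they differ in exactly
   one letter), padded with fewer than m^m isolated vertices, where m grows
   slowly with n.  Its maximal cliques are the isolated vertices and the lines
   (the m words that agree outside one coordinate); every vertex lies on m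
   lines of size m, so there are at least as many lines as non-isolated
   vertices.  Two distinct non-adjacent vertices have at most two common
   neighbours.

   Let C be a cluster of density at least 1/h and s1 the degree sum of the
   subgraph it induces.  Counting the pairs of neighbours of each vertex bounds
   the second moment of the degrees by m s1 + 2|C|^2, and Cauchy-Schwarz then
   gives s1 <= |C| (m + 2 + 2h).  Every edge lies on a single line, so a line
   meeting C in at least m/g vertices accounts for at least m (m - g) / g^2
   of the ordered edges counted by s1.  Hence C covers at most
   g^2 |C| (m + 2 + 2h) / (m (m - g)) lines, and all clusters together cover
   O(g^2 h n / m) lines, a vanishing fraction of the maximal cliques. *)

From Stdlib Require Import Reals Lra.
From mathcomp Require Import all_boot zify.

Set Implicit Arguments.
Unset Strict Implicit.
Unset Printing Implicit Defensive.

Lemma card_set_sum (T : finType) (P : pred T) :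
  #|[set x | P x]| = \sum_x P x.
Proof.
rewrite -sum1_card big_mkcond /=; apply: eq_bigr => x _; rewrite inE.
by case: (P x).
Qed.

Lemma sum_nat_in_card (T : finType) (A : {pred T}) (P : pred T) :
  \sum_(x in A) P x = #|[set x in A | P x]|.
Proof.
rewrite card_set_sum big_mkcond /=; apply: eq_bigr => x _.
by case: (x \in A); case: (P x).
Qed.

Lemma card_offdiag_pairs (T : finType) (A : {set T}) :
  #|A| * #|A|.-1 = \sum_u \sum_w [&& u \in A, w \in A & u != w].
Proof.
rewrite -sum_nat_const big_mkcond /=; apply: eq_bigr => u _.
case uA: (u \in A); last by rewrite big1.
rewrite /= -(card_set_sum (fun w => (w \in A) && (u != w))).
rewrite (cardsD1 u A) uA add1n /=.
by apply: eq_card => w; rewrite !inE andbC eq_sym.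
Qed.

Lemma sqr_sum (T : finType) (A : {pred T}) (f : T -> nat) :
  (\sum_(x in A) f x) ^ 2 = \sum_(x in A) \sum_(y in A) f x * f y.
Proof.
by rewrite -mulnn big_distrl /=; apply: eq_bigr => x _; rewrite big_distrr.
Qed.

Lemma sqr_sum_le (T : finType) (A : {pred T}) (f : T -> nat) :
  (\sum_(x in A) f x) ^ 2 <= #|A| * \sum_(x in A) f x ^ 2.
Proof.
rewrite sqr_sum -(@leq_pmul2l 2) // big_distrr /=.
apply: (@leq_trans (\sum_(x in A) \sum_(y in A) (f x ^ 2 + f y ^ 2))).
  apply: leq_sum => x _; rewrite big_distrr /=; apply: leq_sum => y _.
  exact: nat_Cauchy.
rewrite (eq_bigr (fun x => #|A| * f x ^ 2 + \sum_(y in A) f y ^ 2)); last first.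
  by move=> x _; rewrite big_split /= sum_nat_const.
by rewrite big_split /= sum_nat_const -big_distrr /= mul2n addnn.
Qed.

Lemma heavy_intersection_pairs (k g a : nat) :
  k <= g * a -> k * (k - g) <= g ^ 2 * (a * a.-1).
Proof.
move=> k_le.
have : k - g <= g * a.-1 by case: a k_le => [|a] /=; nia.
move=> /(leq_mul k_le) /leq_trans; apply; rewrite -mulnn; nia.
Qed.

Lemma first_moment_le (c s1 s2 k h : nat) :
  c * c.-1 <= h * s1 -> s1 ^ 2 <= c * s2 -> s2 <= k * s1 + 2 * c ^ 2 ->
  s1 <= c * (k + 2 + 2 * h).
Proof.
move=> dense cauchy sqr_le.
have [s1_lt | c_le] := ltnP s1 c; first by apply: leq_trans (ltnW s1_lt) _; lia.
have [-> // | s1_gt0] := posnP s1.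
rewrite -(leq_pmul2l s1_gt0); apply: leq_trans (leq_trans _ cauchy) _.
  by rewrite mulnn.
have c2 : c * c <= h * s1 + c.
  by move: dense; case: (c) => // c' /=; rewrite mulnS addnC leq_add2r.
have c3 : c * (c * c) <= c * (h * s1 + c) by rewrite leq_mul2l c2 orbT.
have c_sq : c * c <= c * s1 by rewrite leq_mul2l c_le orbT.
apply: (leq_trans (leq_mul (leqnn c) sqr_le)); nia.
Qed.

Lemma is_cliqueP n (E : rel 'I_n) (D : {set 'I_n}) :
  reflect (forall x y, x \in D -> y \in D -> x != y -> E x y) (is_clique E D).
Proof.
apply: (iffP forallP) => [cD x y xD yD xy | cD x].
- by move: (cD x) => /implyP/(_ xD)/forallP/(_ y)/implyP/(_ yD)/implyP/(_ xy).
- apply/implyP => xD; apply/forallP => y; apply/implyP => yD; apply/implyP.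
  exact: cD.
Qed.

Section LinearCliques.
Variables (n : nat) (E : rel 'I_n).
Hypotheses (E_sym : symmetric E) (E_irr : irreflexive E).
Variables (k : nat) (line : 'I_n -> 'I_n -> {set 'I_n}).
Hypothesis line_l : forall u w, E u w -> u \in line u w.
Hypothesis line_r : forall u w, E u w -> w \in line u w.
Hypothesis line_clique : forall u w, E u w -> is_clique E (line u w).
Hypothesis line_card : forall u w, E u w -> #|line u w| = k.
Hypothesis line_common : forall u w x, E u w -> E u x -> E w x -> x \in line u w.
Hypothesis common_nbrs_le2 : forall u w, u != w -> ~~ E u w ->
  #|[set x | E u x && E w x]| <= 2.

Lemma max_clique_no_extension D x : is_max_clique E D -> x \notin D ->
  (forall y, y \in D -> E x y) -> False.
Proof.
case/andP => /is_cliqueP cD /forallP /(_ (x |: D)) /implyP maxD xD Ex.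
have : D \proper x |: D.
  by apply/properP; split; [exact: subsetUr | exists x; rewrite ?setU11].
move=> /maxD /negP; apply; apply/is_cliqueP => a b.
rewrite !in_setU1 => /orP[/eqP -> | aD] /orP[/eqP -> | bD] ab.
- by rewrite eqxx in ab.
- exact: Ex.
- by rewrite E_sym; apply: Ex.
- exact: cD.
Qed.

Lemma line_max_clique u w : E u w -> is_max_clique E (line u w).
Proof.
move=> Euw; apply/andP; split; first exact: line_clique.
apply/forallP => D'; apply/implyP => /properP [sub [x xD' xL]].
apply/negP => /is_cliqueP cD.
have uD : u \in D' by apply: (subsetP sub); exact: line_l.
have wD : w \in D' by apply: (subsetP sub); exact: line_r.
have xu : x != u by apply: contraNneq xL => ->; exact: line_l.
have xw : x != w by apply: contraNneq xL => ->; exact: line_r.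
by move/negP: xL; apply; apply: line_common => //; apply: cD; rewrite // eq_sym.
Qed.

Lemma max_clique_line D u w : is_max_clique E D -> u \in D -> w \in D -> u != w ->
  D = line u w.
Proof.
move=> mD uD wD uw; have /is_cliqueP cD := proj1 (andP mD).
have Euw := cD _ _ uD wD uw.
have sub : D \subset line u w.
  apply/subsetP => x xD.
  have [-> | xu] := eqVneq x u; first exact: line_l.
  have [-> | xw] := eqVneq x w; first exact: line_r.
  by apply: line_common => //; apply: cD; rewrite // eq_sym.
apply/eqP; rewrite eqEproper sub /=; apply/negP => pr.
case/andP: mD => _ /forallP /(_ (line u w)) /implyP /(_ pr).
by rewrite line_clique.
Qed.

Lemma max_clique_card D : is_max_clique E D -> 1 < #|D| -> #|D| = k.
Proof.
move=> mD /card_gt1P [u [w [uD wD uw]]].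
rewrite (max_clique_line mD uD wD uw) line_card //.
exact: (is_cliqueP _ _ (proj1 (andP mD))).
Qed.

Lemma max_clique_isolated D : 0 < n -> is_max_clique E D -> #|D| != k ->
  exists2 v, D = [set v] & forall w, ~~ E v w.
Proof.
move=> n_gt0 mD Dk.
have : #|D| <= 1.
  by rewrite leqNgt; apply/negP => /(max_clique_card mD) Dk'; rewrite Dk' eqxx in Dk.
rewrite leq_eqVlt ltnS leqn0 => /orP [/cards1P [v Dv] | /eqP /cards0_eq D0].
- exists v => // w; apply/negP => Evw.
  apply: (max_clique_no_extension (x := w) mD).
  + by rewrite Dv; apply: contraL Evw => /set1P ->; rewrite E_irr.
  + by move=> y; rewrite Dv => /set1P ->; rewrite E_sym.
- exfalso; apply: (max_clique_no_extension (x := Ordinal n_gt0) mD) => [|y];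
    by rewrite D0 ?inE.
Qed.

Definition deg (C : {set 'I_n}) u := \sum_(w in C) E u w.
Definition deg_sum (C : {set 'I_n}) := \sum_(u in C) deg C u.

Lemma deg_sumE C : deg_sum C = \sum_u \sum_w [&& u \in C, w \in C & E u w].
Proof.
rewrite /deg_sum big_mkcond /=; apply: eq_bigr => u _.
rewrite /deg big_mkcond /=.
case uC: (u \in C); last by rewrite big1.
by apply: eq_bigr => w _; case: (w \in C).
Qed.

Lemma n_edges_in_double C : 2 * n_edges_in E C = deg_sum C.
Proof.
rewrite deg_sumE /n_edges_in card_set_sum pair_big /=.
pose edge (p : 'I_n * 'I_n) := [&& p.1 \in C, p.2 \in C & E p.1 p.2].
have split_lt p : edge p = (edge p && (p.1 < p.2)%N) + (edge p && (p.2 < p.1)%N) :> nat.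
  rewrite /edge; case: p => a b /=.
  case: (a \in C) (b \in C) => [] [] //=; case Eab: (E a b) => //=.
  case: (ltngtP a b) => // /val_inj ab.
  by rewrite ab E_irr in Eab.
rewrite (eq_bigr _ (fun p _ => split_lt p)) big_split /=.
have swap_inj : injective (fun p : 'I_n * 'I_n => (p.2, p.1)).
  by move=> [a b] [c d] [-> ->].
rewrite [X in _ = _ + X](reindex_inj swap_inj) /= mul2n -addnn.
congr (_ + _); apply: eq_bigr => [[a b]] _ /=; rewrite /edge /= ?[E b a]E_sym;
  by case: (a \in C) (b \in C) (a < b)%N (E a b) => [] [] [] [].
Qed.

Definition open_pairs (C : {set 'I_n}) u :=
  \sum_(w1 in C) \sum_(w2 in C) [&& E u w1, E u w2, w1 != w2 & ~~ E w1 w2].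

Lemma deg_sqr_le C u : deg C u ^ 2 <= k * deg C u + open_pairs C u.
Proof.
rewrite /deg /open_pairs sqr_sum.
have split_pair w1 w2 : E u w1 * E u w2 =
    E u w1 * (E u w2 && ((w1 == w2) || E w1 w2)) +
    [&& E u w1, E u w2, w1 != w2 & ~~ E w1 w2] :> nat.
  by case: (E u w1) (E u w2) (w1 == w2) (E w1 w2) => [] [] [] [].
rewrite (eq_bigr _ (fun w1 _ => eq_bigr _ (fun w2 _ => split_pair w1 w2))).
rewrite (eq_bigr _ (fun w1 _ => big_split _ _ _ _ _)) big_split /= leq_add2r.
rewrite big_distrr /=; apply: leq_sum => w1 _; rewrite -big_distrr /=.
case Euw1 : (E u w1); rewrite ?mul0n ?muln0 // mul1n muln1.
(* a neighbour of u equal or adjacent to w1 lies on the line through u and w1 *)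
rewrite sum_nat_in_card -(line_card Euw1); apply: subset_leq_card.
apply/subsetP => x; rewrite !inE => /and3P [_ Eux /orP [/eqP <- | Ew1x]].
- exact: line_r.
- exact: line_common.
Qed.

Lemma sum_open_pairs_le (C : {set 'I_n}) :
  \sum_(u in C) open_pairs C u <= 2 * #|C| ^ 2.
Proof.
rewrite /open_pairs exchange_big /=.
rewrite (eq_bigr _ (fun w1 _ => exchange_big _ _ _ _ _ _)) /=.
apply: (@leq_trans (\sum_(w1 in C) \sum_(w2 in C) 2)); last first.
  by rewrite !sum_nat_const /= -mulnn mulnA mulnC.
apply: leq_sum => w1 _; apply: leq_sum => w2 _.
case w12: (w1 != w2); last by rewrite big1 // => u _; rewrite andFb !andbF.
case Ew12: (E w1 w2); first by rewrite big1 // => u _; rewrite /= !andbF.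
rewrite sum_nat_in_card; apply: leq_trans (common_nbrs_le2 w12 (negbT Ew12)).
apply: subset_leq_card; apply/subsetP => x; rewrite !inE.
by case/andP => _ /and3P [Exw1 Exw2 _]; rewrite E_sym Exw1 E_sym Exw2.
Qed.

Lemma deg_sum_le h (C : {set 'I_n}) : #|C| * #|C|.-1 <= h * deg_sum C ->
  deg_sum C <= #|C| * (k + 2 + 2 * h).
Proof.
move=> dense; apply: (first_moment_le dense (sqr_sum_le _ _)).
apply: (@leq_trans (\sum_(u in C) (k * deg C u + open_pairs C u))).
  by apply: leq_sum => u _; exact: deg_sqr_le.
by rewrite big_split /= -big_distrr leq_add2l sum_open_pairs_le.
Qed.

Lemma max_clique_pairs_le (C : {set 'I_n}) :
  \sum_(D | is_max_clique E D) #|C :&: D| * #|C :&: D|.-1 <= deg_sum C.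
Proof.
rewrite deg_sumE (eq_bigr _ (fun D _ => card_offdiag_pairs (C :&: D))).
rewrite exchange_big /=; apply: leq_sum => u _.
rewrite exchange_big /=; apply: leq_sum => w _.
have [uC | uC] := boolP (u \in C); last first.
  by rewrite big1 // => D _; rewrite inE (negbTE uC).
have [wC | wC] := boolP (w \in C); last first.
  by rewrite big1 // => D _; rewrite !inE (negbTE wC) !andbF.
have [uw | ] := boolP (u != w); last by rewrite big1 // => D _; rewrite !andbF.
case Euw: (E u w); last first.
  rewrite big1 // => D mD; rewrite !inE uC wC /=.
  case uD: (u \in D) => //; case wD: (w \in D) => //=.
  by move: (is_cliqueP _ _ (proj1 (andP mD)) u w uD wD uw); rewrite Euw.
(* the only maximal clique through the edge uw is its line *)
rewrite sum_nat_in_card; apply: (@leq_trans #|[set line u w]|); last by rewrite cards1.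
apply: subset_leq_card.
apply/subsetP => D; rewrite !inE uC wC /= andbT => /andP [mD /andP [uD wD]].
by apply/eqP; apply: max_clique_line.
Qed.

Definition heavy_lines g (C : {set 'I_n}) :=
  [set D | is_max_clique E D && (#|D| == k) && (k <= g * #|C :&: D|)].

Lemma card_heavy_lines g (C : {set 'I_n}) :
  #|heavy_lines g C| * (k * (k - g)) <= g ^ 2 * deg_sum C.
Proof.
rewrite -sum_nat_const.
apply: (@leq_trans (\sum_(D in heavy_lines g C) g ^ 2 * (#|C :&: D| * #|C :&: D|.-1))).
  by apply: leq_sum => D; rewrite inE => /andP [_]; exact: heavy_intersection_pairs.
rewrite -big_distrr leq_mul2l; apply/orP; right.
apply: leq_trans (max_clique_pairs_le C).
rewrite [X in _ <= X]big_mkcond [X in X <= _]big_mkcond /=.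
apply: leq_sum => D _; rewrite inE.
by case: (is_max_clique E D) => //=; case: ifP.
Qed.

Definition covered_max_cliques g (P : {set {set 'I_n}}) :=
  [set D | is_max_clique E D && [exists C in P, #|D| <= g * #|C :&: D|]].

Lemma card_covered_le g (P : {set {set 'I_n}}) :
  #|covered_max_cliques g P| <=
  #|[set D | is_max_clique E D && (#|D| != k)]| + \sum_(C in P) #|heavy_lines g C|.
Proof.
rewrite !card_set_sum (eq_bigr _ (fun C _ => card_set_sum _)).
rewrite exchange_big -big_split /=; apply: leq_sum => D _.
case mD: (is_max_clique E D) => //=.
case: existsP => //= [[C /andP [CP covD]]].
case: eqP => //= Dk; rewrite (bigD1 C) //= Dk in covD *.
by rewrite covD leq_addr.
Qed.

Lemma card_isolated_max_cliques_le (H : {set 'I_n}) : 0 < n ->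
  (forall v, v \in H -> exists w, E v w) ->
  #|[set D | is_max_clique E D && (#|D| != k)]| <= #|~: H|.
Proof.
move=> n_gt0 H_nonisolated.
apply: (leq_trans _ (leq_imset_card (fun v => [set v]) (~: H))).
apply: subset_leq_card; apply/subsetP => D; rewrite inE => /andP [mD Dk].
have [v -> v_isolated] := max_clique_isolated n_gt0 mD Dk.
apply: imset_f; rewrite inE; apply/negP => /H_nonisolated [w].
by apply/negP.
Qed.

Lemma sum_heavy_lines_le g h (P : {set {set 'I_n}}) :
  partition P [set: 'I_n] ->
  (forall C, C \in P -> #|C| * #|C|.-1 <= h * deg_sum C) ->
  (\sum_(C in P) #|heavy_lines g C|) * (k * (k - g)) <= g ^ 2 * (n * (k + 2 + 2 * h)).
Proof.
move=> P_part P_dense; rewrite big_distrl /=.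
apply: (@leq_trans (\sum_(C in P) g ^ 2 * (#|C| * (k + 2 + 2 * h)))).
  apply: leq_sum => C CP; apply: (leq_trans (card_heavy_lines g C)).
  by rewrite leq_mul2l deg_sum_le ?orbT // P_dense.
by rewrite -big_distrr /= -big_distrl /= -(card_partition P_part) cardsT card_ord.
Qed.

Lemma card_lines_ge (H : {set 'I_n}) d :
  (forall v, v \in H -> d <= #|[set D | is_max_clique E D && (#|D| == k) && (v \in D)]|) ->
  #|H| * d <= #|[set D | is_max_clique E D && (#|D| == k)]| * k.
Proof.
move=> H_deg; rewrite -sum_nat_const.
have -> : #|[set D | is_max_clique E D && (#|D| == k)]| * k =
    \sum_(D in [set D | is_max_clique E D && (#|D| == k)]) \sum_v (v \in D : nat).
  rewrite -sum_nat_const; apply: eq_bigr => D; rewrite inE => /andP [_ /eqP <-].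
  by rewrite -card_set_sum; apply: eq_card => v; rewrite inE.
rewrite exchange_big /= [X in _ <= X](bigID (fun v => v \in H)) /=.
apply: leq_trans (leq_addr _ _); apply: leq_sum => v vH.
apply: (leq_trans (H_deg v vH)).
by rewrite sum_nat_in_card; apply: eq_leq; apply: eq_card => D; rewrite ?inE.
Qed.

End LinearCliques.

Section Hamming.
Variables c m : nat.

Definition hvertex := ('I_c * {ffun 'I_m -> 'I_m})%type.
Definition coord_diff (f g : {ffun 'I_m -> 'I_m}) := [set i | f i != g i].
Definition hadj (a b : hvertex) := (a.1 == b.1) && (#|coord_diff a.2 b.2| == 1).
Definition hline (a b : hvertex) :=
  [set x : hvertex | (x.1 == a.1) && [forall j, (a.2 j == b.2 j) ==> (x.2 j == a.2 j)]].
Definition fupd (f : {ffun 'I_m -> 'I_m}) i t := [ffun j => if j == i then t else f j].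

Lemma coord_diff1P (f g : {ffun 'I_m -> 'I_m}) : #|coord_diff f g| == 1 ->
  exists2 i, f i != g i & forall j, j != i -> f j = g j.
Proof.
move/cards1P => [i fg_i]; exists i.
  by have := set11 i; rewrite -fg_i inE.
move=> j ji; apply/eqP; apply: contraNT ji => fj.
have : j \in coord_diff f g by rewrite inE.
by rewrite fg_i => /set1P ->.
Qed.

Lemma coord_diffC (f g : {ffun 'I_m -> 'I_m}) : coord_diff f g = coord_diff g f.
Proof. by apply/setP => i; rewrite !inE eq_sym. Qed.

Lemma hadj_sym : symmetric hadj.
Proof. by move=> a b; rewrite /hadj eq_sym coord_diffC. Qed.

Lemma hadj_irr : irreflexive hadj.
Proof.
move=> a; rewrite /hadj eqxx /=.
suff -> : coord_diff a.2 a.2 = set0 by rewrite cards0.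
by apply/setP => i; rewrite !inE eqxx.
Qed.

Lemma hvertex_eq (x y : hvertex) : x.1 = y.1 -> (forall j, x.2 j = y.2 j) -> x = y.
Proof. by case: x y => [x1 x2] [y1 y2] /= -> xy; congr (_, _); apply/ffunP. Qed.

Lemma hline_l (a b : hvertex) : a \in hline a b.
Proof. by rewrite inE eqxx /=; apply/forallP => j; rewrite eqxx implybT. Qed.

Lemma hline_r (a b : hvertex) : hadj a b -> b \in hline a b.
Proof.
case/andP => /eqP ab1 _; rewrite inE ab1 eqxx /=.
by apply/forallP => j; apply/implyP => /eqP ->.
Qed.

Lemma hlineE (a b : hvertex) (i : 'I_m) :
  a.2 i != b.2 i -> (forall j, j != i -> a.2 j = b.2 j) ->
  forall x, (x \in hline a b) = (x.1 == a.1) && [forall j, (j != i) ==> (x.2 j == a.2 j)].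
Proof.
move=> ab_i ab_off x; rewrite inE; congr (_ && _).
apply/forallP/forallP => x_on j; move/implyP: (x_on j) => x_j; apply/implyP.
- by move=> ji; apply: x_j; rewrite ab_off.
- by move=> ab_j; apply: x_j; apply: contraTneq ab_j => ->.
Qed.

Lemma hline_clique (a b x y : hvertex) : hadj a b -> x \in hline a b -> y \in hline a b ->
  x != y -> hadj x y.
Proof.
case/andP => _ /coord_diff1P [i ab_i ab_off].
rewrite !(hlineE ab_i ab_off) => /andP [/eqP x1 /forallP x_on] /andP [/eqP y1 /forallP y_on] xy.
have xy_off j : j != i -> x.2 j = y.2 j.
  by move=> ji; move: (x_on j) (y_on j); rewrite ji => /eqP -> /eqP ->.
have xy_i : x.2 i != y.2 i.
  apply: contra xy => /eqP xy_i; apply/eqP; apply: hvertex_eq; first by rewrite x1 y1.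
  by move=> j; have [-> // | ji] := eqVneq j i; exact: xy_off.
rewrite /hadj x1 y1 eqxx /=; apply/cards1P; exists i; apply/setP => j; rewrite !inE.
by have [-> | ji] := eqVneq j i; rewrite ?xy_i // xy_off // eqxx.
Qed.

Lemma hline_card (a b : hvertex) : hadj a b -> #|hline a b| = m.
Proof.
case/andP => _ /coord_diff1P [i ab_i ab_off].
have inj : injective (fun t : 'I_m => (a.1, fupd a.2 i t)).
  by move=> t1 t2 [] /ffunP /(_ i); rewrite !ffunE eqxx.
rewrite -[RHS]card_ord -(card_imset predT inj); apply: eq_card => x.
rewrite (hlineE ab_i ab_off); apply/andP/imsetP.
- case=> /eqP x1 /forallP x_on; exists (x.2 i) => //.
  apply: hvertex_eq => //= j; rewrite ffunE.
  by have [-> // | ji] := eqVneq j i; move: (x_on j); rewrite ji => /eqP.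
- case=> t _ ->; split => //=; apply/forallP => j; apply/implyP => ji.
  by rewrite ffunE (negbTE ji).
Qed.

Lemma hline_common (a b x : hvertex) : hadj a b -> hadj a x -> hadj b x -> x \in hline a b.
Proof.
case/andP => _ /coord_diff1P [i ab_i ab_off].
case/andP => /eqP ax1 /coord_diff1P [j _ ax_off].
case/andP => _ /coord_diff1P [l _ bx_off].
rewrite (hlineE ab_i ab_off) ax1 eqxx /=; apply/forallP => p; apply/implyP => pi.
apply/eqP/esym; have [pj | pj] := eqVneq p j; last exact: ax_off.
have [pl | pl] := eqVneq p l; last by rewrite ab_off // bx_off.
have ip : i != p by rewrite eq_sym.
by move: ab_i; rewrite -pj in ax_off; rewrite -pl in bx_off; rewrite ax_off // bx_off // eqxx.
Qed.

Definition hstep (a b : hvertex) (q : 'I_m) : hvertex := (a.1, fupd a.2 q (b.2 q)).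

Lemma hcommon_nbr_shape (a b x : hvertex) :
  a.1 = b.1 -> a.2 != b.2 -> #|coord_diff a.2 b.2| != 1 -> hadj a x -> hadj b x ->
  exists j l, [/\ x = hstep a b j, j \in coord_diff a.2 b.2
                 & coord_diff a.2 b.2 \subset [set j; l]].
Proof.
move=> ab1 ab2 ab_n1.
case/andP => /eqP ax1 /coord_diff1P [j ax_j ax_off].
case/andP => _ /coord_diff1P [l bx_l bx_off].
have sub : coord_diff a.2 b.2 \subset [set j; l].
  apply/subsetP => q; rewrite !inE; apply: contraTT; rewrite negb_or => /andP [qj ql].
  by rewrite ax_off // bx_off // eqxx.
suff x_eq : x = hstep a b j.
  by exists j, l; split; rewrite // inE; move: ax_j; rewrite x_eq /= ffunE eqxx.
apply: hvertex_eq => //= q; rewrite ffunE.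
have [-> | qj] := eqVneq q j; last by rewrite ax_off.
apply/esym/bx_off; apply: contra ab_n1 => /eqP jl; subst l.
have : #|coord_diff a.2 b.2| <= 1.
  by apply: (leq_trans (subset_leq_card sub)); rewrite setUid cards1.
rewrite leq_eqVlt ltnS leqn0 => /orP [// | /eqP /cards0_eq ab_eq].
case/eqP: ab2; apply/ffunP => p; apply/eqP.
have : p \notin coord_diff a.2 b.2 by rewrite ab_eq in_set0.
by rewrite inE negbK.
Qed.

Lemma hcommon_nbrs_le2 (a b : hvertex) : a != b -> ~~ hadj a b ->
  #|[set x | hadj a x && hadj b x]| <= 2.
Proof.
move=> ab nab.
have [ab1 | ab1] := eqVneq a.1 b.1; last first.
  rewrite (_ : [set x | hadj a x && hadj b x] = set0) ?cards0 //.
  apply/setP => x; rewrite !inE; apply: contra_neqF ab1.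
  by case/andP => /andP [/eqP -> _] /andP [/eqP -> _].
have ab2 : a.2 != b.2.
  by apply: contra ab => /eqP ab2; apply/eqP; apply: hvertex_eq => // j; rewrite ab2.
have ab_n1 : #|coord_diff a.2 b.2| != 1 by move: nab; rewrite /hadj ab1 eqxx.
case: (set_0Vmem [set x | hadj a x && hadj b x]) => [-> | [x0]]; first by rewrite cards0.
rewrite inE => /andP [ax0 bx0].
have [j0 [l0 [_ _ sub]]] := hcommon_nbr_shape ab1 ab2 ab_n1 ax0 bx0.
apply: (@leq_trans #|hstep a b @: [set j0; l0]|); last first.
  by apply: (leq_trans (leq_imset_card _ _)); rewrite cards2; case: (j0 != l0).
apply: subset_leq_card; apply/subsetP => x; rewrite inE => /andP [ax bx].
have [j [l [-> j_diff _]]] := hcommon_nbr_shape ab1 ab2 ab_n1 ax bx.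
by apply: imset_f; apply: (subsetP sub).
Qed.

Definition other_symbol (t : 'I_m) : 'I_m := odflt t [pick s | s != t].

Lemma other_symbol_neq t : 1 < m -> other_symbol t != t.
Proof.
move=> m_gt1; rewrite /other_symbol; case: pickP => [s // | none].
move: (cardC1 t); rewrite card_ord (@eq_card0 _ (predC1 t)) //.
by case: m m_gt1 t none => [|[|]].
Qed.

Definition hnbr (a : hvertex) i : hvertex := (a.1, fupd a.2 i (other_symbol (a.2 i))).

Lemma hadj_nbr (a : hvertex) i : 1 < m -> hadj a (hnbr a i).
Proof.
move=> m_gt1; rewrite /hadj eqxx /=; apply/cards1P; exists i; apply/setP => j.
rewrite !inE ffunE; have [-> | ji] := eqVneq j i; last by rewrite eqxx.
by rewrite eq_sym other_symbol_neq.
Qed.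

Lemma hnbr_notin_hline (a : hvertex) i j : 1 < m -> i != j ->
  hnbr a i \notin hline a (hnbr a j).
Proof.
move=> m_gt1 ij; rewrite inE negb_and negb_forall; apply/orP; right.
apply/existsP; exists i.
by rewrite negb_imply /= !ffunE (negbTE ij) !eqxx /= other_symbol_neq.
Qed.

End Hamming.

Definition hcode c m n (fits : #|{: hvertex c m}| <= n) (a : hvertex c m) : 'I_n :=
  widen_ord fits (enum_rank a).
Definition hgraph c m n (fits : #|{: hvertex c m}| <= n) : rel 'I_n :=
  fun x y => [exists a, exists b, [&& x == hcode fits a, y == hcode fits b & hadj a b]].
Definition hgraph_line c m n (fits : #|{: hvertex c m}| <= n) (u w : 'I_n) : {set 'I_n} :=
  [set x | [exists a, exists b, exists t,
     [&& u == hcode fits a, w == hcode fits b, x == hcode fits t & t \in hline a b]]].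

Section HammingCode.
Variables c m n : nat.
Hypothesis fits : #|{: hvertex c m}| <= n.
Local Notation code := (hcode fits).
Local Notation E := (hgraph fits).
Local Notation line := (hgraph_line fits).

Lemma hcode_inj : injective code.
Proof. by move=> a b /(congr1 val) /= /val_inj /enum_rank_inj. Qed.

Lemma hgraph_code a b : E (code a) (code b) = hadj a b.
Proof.
apply/existsP/idP => [[a' /existsP [b' /and3P [/eqP aa' /eqP bb' ab]]] | ab].
  by rewrite (hcode_inj aa') (hcode_inj bb').
by exists a; apply/existsP; exists b; rewrite !eqxx.
Qed.

Lemma hgraph_inv x y : E x y -> exists a b, [/\ x = code a, y = code b & hadj a b].
Proof.
by case/existsP => a /existsP [b /and3P [/eqP -> /eqP -> ab]]; exists a, b.
Qed.

Lemma hgraph_line_code a b : line (code a) (code b) = code @: hline a b.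
Proof.
apply/setP => x; rewrite inE; apply/existsP/imsetP.
- case=> a' /existsP [b' /existsP [t /and4P [/eqP aa' /eqP bb' /eqP -> t_on]]].
  by exists t => //; rewrite (hcode_inj aa') (hcode_inj bb').
- case=> t t_on ->; exists a; apply/existsP; exists b; apply/existsP; exists t.
  by rewrite !eqxx t_on.
Qed.

Lemma hgraph_sym : symmetric E.
Proof.
move=> x y; apply/idP/idP => /hgraph_inv [a [b [-> -> ab]]];
  by rewrite hgraph_code hadj_sym.
Qed.

Lemma hgraph_irr : irreflexive E.
Proof.
move=> x; apply/negbTE/negP => /hgraph_inv [a [b [-> /hcode_inj <-]]].
by rewrite hadj_irr.
Qed.

Lemma hgraph_line_l u w : E u w -> u \in line u w.
Proof.
by case/hgraph_inv => a [b [-> -> ab]]; rewrite hgraph_line_code imset_f ?hline_l.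
Qed.

Lemma hgraph_line_r u w : E u w -> w \in line u w.
Proof.
by case/hgraph_inv => a [b [-> -> ab]]; rewrite hgraph_line_code imset_f ?hline_r.
Qed.

Lemma hgraph_line_clique u w : E u w -> is_clique E (line u w).
Proof.
case/hgraph_inv => a [b [-> -> ab]]; rewrite hgraph_line_code.
apply/is_cliqueP => _ _ /imsetP [x x_on ->] /imsetP [y y_on ->] xy.
by rewrite hgraph_code (hline_clique ab x_on y_on) //; apply: contra xy => /eqP ->.
Qed.

Lemma hgraph_line_card u w : E u w -> #|line u w| = m.
Proof.
case/hgraph_inv => a [b [-> -> ab]].
by rewrite hgraph_line_code card_imset ?hline_card //; exact: hcode_inj.
Qed.

Lemma hgraph_line_common u w x : E u w -> E u x -> E w x -> x \in line u w.
Proof.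
case/hgraph_inv => a [b [-> -> ab]].
case/hgraph_inv => a' [t [/hcode_inj <- -> a_t]].
case/hgraph_inv => b' [t' [/hcode_inj <- /hcode_inj <- bt]].
by rewrite hgraph_line_code imset_f // hline_common.
Qed.

Lemma hgraph_common_nbrs_le2 u w : u != w -> ~~ E u w ->
  #|[set x | E u x && E w x]| <= 2.
Proof.
move=> uw nuw.
case: (set_0Vmem [set x | E u x && E w x]) => [-> | [x0]]; first by rewrite cards0.
rewrite inE => /andP [/hgraph_inv [a [_ [eu _ _]]] /hgraph_inv [b [_ [ew _ _]]]].
subst u w; apply: (@leq_trans #|code @: [set x | hadj a x && hadj b x]|); last first.
  apply: (leq_trans (leq_imset_card _ _)); apply: hcommon_nbrs_le2.
  - by apply: contra uw => /eqP ->.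
  - by rewrite -hgraph_code.
apply: subset_leq_card; apply/subsetP => x; rewrite inE => /andP [].
case/hgraph_inv => a' [y [/hcode_inj <- -> ay]].
case/hgraph_inv => b' [y' [/hcode_inj <- /hcode_inj <- b_y]].
by apply: imset_f; rewrite inE ay b_y.
Qed.

Definition hcode_range := [set code a | a in predT].

Lemma card_hcode_range : #|hcode_range| = #|{: hvertex c m}|.
Proof. by rewrite card_imset //; exact: hcode_inj. Qed.

Lemma hcode_range_nonisolated : 1 < m -> forall v, v \in hcode_range -> exists w, E v w.
Proof.
move=> m_gt1 _ /imsetP [a _ ->].
by exists (code (hnbr a (Ordinal (ltnW m_gt1)))); rewrite hgraph_code hadj_nbr.
Qed.

Lemma hcode_range_lines : 1 < m -> forall v, v \in hcode_range ->
  m <= #|[set D | is_max_clique E D && (#|D| == m) && (v \in D)]|.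
Proof.
move=> m_gt1 _ /imsetP [a _ ->].
have E_nbr i : E (code a) (code (hnbr a i)) by rewrite hgraph_code hadj_nbr.
have inj : injective (fun i : 'I_m => line (code a) (code (hnbr a i))).
  move=> i j /= ij_line; apply/eqP; apply/negPn/negP => ij.
  have := hgraph_line_r (E_nbr i).
  rewrite ij_line hgraph_line_code mem_imset; last exact: hcode_inj.
  by rewrite (negbTE (hnbr_notin_hline a m_gt1 ij)).
apply: (@leq_trans #|[set line (code a) (code (hnbr a i)) | i in 'I_m]|).
  by rewrite card_imset // card_ord.
apply: subset_leq_card; apply/subsetP => D /imsetP [i _ ->].
rewrite inE (hgraph_line_card (E_nbr i)) eqxx andbT hgraph_line_l // andbT.
exact: (line_max_clique hgraph_line_l hgraph_line_r hgraph_line_clique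
  hgraph_line_common (E_nbr i)).
Qed.

Lemma hgraph_covered_le g h (P : {set {set 'I_n}}) :
  1 < m -> 0 < n -> partition P [set: 'I_n] ->
  (forall C, C \in P -> #|C| * #|C|.-1 <= h * deg_sum E C) ->
  #|covered_max_cliques E g P| * (m * (m - g)) <=
    (n - #|{: hvertex c m}|) * (m * (m - g)) + g ^ 2 * (n * (m + 2 + 2 * h)).
Proof.
move=> m_gt1 n_gt0 P_part P_dense.
have isolated := card_isolated_max_cliques_le hgraph_sym hgraph_irr hgraph_line_l
  hgraph_line_r hgraph_line_clique hgraph_line_card hgraph_line_common n_gt0
  (hcode_range_nonisolated m_gt1).
have heavy := sum_heavy_lines_le hgraph_sym hgraph_line_l hgraph_line_r
  hgraph_line_clique hgraph_line_card hgraph_line_common hgraph_common_nbrs_le2 g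
  P_part P_dense.
have card_compl : #|~: hcode_range| = n - #|{: hvertex c m}|.
  by rewrite -card_hcode_range cardsCs setCK card_ord.
rewrite card_compl in isolated.
apply: (leq_trans (leq_mul (card_covered_le E m g P) (leqnn _))).
by rewrite mulnDl leq_add // leq_mul.
Qed.

Lemma hgraph_max_cliques_ge : 1 < m ->
  #|{: hvertex c m}| <= #|[set D | is_max_clique E D]|.
Proof.
move=> m_gt1; have := card_lines_ge (hcode_range_lines m_gt1).
rewrite card_hcode_range leq_pmul2r ?(ltnW m_gt1) // => /leq_trans; apply.
by apply: subset_leq_card; apply/subsetP => D; rewrite !inE => /andP [].
Qed.

End HammingCode.

(* With m := hside n and q := m ^ m there are hcopies n >= q copies of
   H(m, m), and fewer than q vertices are left isolated. *)
Definition hside n := \max_(j < n.+1 | j ^ j * j ^ j <= n) j.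
Definition hcopies n := n %/ hside n ^ hside n.

Lemma hside_spec n : 0 < n -> hside n ^ hside n * hside n ^ hside n <= n.
Proof.
move=> n_gt0; apply: (big_ind (fun x => x ^ x * x ^ x <= n)) => // x y.
by rewrite /maxn; case: ifP.
Qed.

Lemma hside_ge n K : 0 < K -> K ^ K * K ^ K <= n -> K <= hside n.
Proof.
move=> K_gt0 KK_le.
have K_le : K <= K ^ K * K ^ K.
  apply: (@leq_trans (K ^ K)); first by rewrite -{1}(expn1 K) leq_pexp2l.
  by rewrite leq_pmulr // expn_gt0 K_gt0.
have K_lt : K < n.+1 by rewrite ltnS (leq_trans K_le KK_le).
exact: (@leq_bigmax_cond _ (fun j : 'I_n.+1 => j ^ j * j ^ j <= n)
  (fun j => nat_of_ord j) (Ordinal K_lt) KK_le).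
Qed.

Lemma card_hvertex c m : #|{: hvertex c m}| = c * m ^ m.
Proof. by rewrite card_prod card_ffun !card_ord. Qed.

Lemma hvertex_fits n : #|{: hvertex (hcopies n) (hside n)}| <= n.
Proof. by rewrite card_hvertex leq_divM. Qed.

Definition hgraph_seq n : rel 'I_n := hgraph (hvertex_fits n).
Arguments hgraph_seq : clear implicits.

Lemma covered_count_arith (cov n c q m g h Z : nat) :
  n < c * q + q -> q <= c -> 4 * Z <= q ->
  2 * g + 2 <= m -> 2 * h + 2 <= m -> 16 * Z * g ^ 2 <= m ->
  cov * (m * (m - g)) <= (n - c * q) * (m * (m - g)) + g ^ 2 * (n * (m + 2 + 2 * h)) ->
  cov * Z <= c * q.
Proof.
move=> n_lt q_le Z_le g_le h_le Zg_le cov_le.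
have M_gt0 : 0 < m * (m - g) by rewrite muln_gt0; apply/andP; split; lia.
have mm_le : m * m <= m * (2 * (m - g)) by rewrite leq_mul2l; apply/orP; right; lia.
have q_le_cq : q <= c * q.
  by have [-> // | q_gt0] := posnP q; rewrite leq_pmull // (leq_trans q_gt0).
have rest_le : 4 * Z * ((n - c * q) * (m * (m - g))) <= c * q * (m * m).
  have nM_le : (n - c * q) * (m * (m - g)) <= q * (m * m).
    by apply: leq_mul; rewrite ?leq_mul2l ?leq_subr ?orbT //; lia.
  have Zq_le : 4 * Z * q <= c * q by rewrite leq_mul2r (leq_trans Z_le q_le) orbT.
  have := leq_mul (leqnn (4 * Z)) nM_le; have := leq_mul Zq_le (leqnn (m * m)).
  lia.
have heavy_le : 4 * Z * (g ^ 2 * (n * (m + 2 + 2 * h))) <= c * q * (m * m).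
  have nm_le : n * (m + 2 + 2 * h) <= (2 * (c * q)) * (2 * m) by apply: leq_mul; lia.
  have := leq_mul (leqnn (4 * Z * g ^ 2)) nm_le.
  have := leq_mul (leq_mul Zg_le (leqnn m)) (leqnn (c * q)).
  lia.
rewrite -(leq_pmul2r M_gt0).
have := leq_mul (leqnn (4 * Z)) cov_le; have := leq_mul (leqnn (c * q)) mm_le.
lia.
Qed.

Lemma hgraph_seq_covered_le g h Z : exists N, forall n, N <= n ->
  forall P : {set {set 'I_n}}, partition P [set: 'I_n] ->
  (forall C, C \in P -> #|C| * #|C|.-1 <= h * deg_sum (hgraph_seq n) C) ->
  let max_cliques := [set D | is_max_clique (hgraph_seq n) D] in
  0 < #|max_cliques| /\ #|covered_max_cliques (hgraph_seq n) g P| * Z <= #|max_cliques|.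
Proof.
pose K := 2 * g + 2 * h + 16 * Z * g ^ 2 + 4 * Z + 2.
exists (K ^ K * K ^ K) => n n_ge P P_part P_dense /=.
have K_gt0 : 0 < K by rewrite /K addn2.
have n_gt0 : 0 < n by apply: leq_trans n_ge; rewrite muln_gt0 expn_gt0 K_gt0.
have K_le : K <= hside n by apply: hside_ge.
have m_gt1 : 1 < hside n by apply: leq_trans K_le; rewrite /K; lia.
have q_gt0 : 0 < hside n ^ hside n by rewrite expn_gt0; apply/orP; left; lia.
have q_le : hside n ^ hside n <= hcopies n by rewrite leq_divRL // hside_spec.
have n_lt : n < hcopies n * hside n ^ hside n + hside n ^ hside n.
  by rewrite {1}(divn_eq n (hside n ^ hside n)) ltn_add2l ltn_pmod.
have Z_le : 4 * Z <= hside n ^ hside n.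
  apply: (@leq_trans (hside n)); first by apply: leq_trans K_le; rewrite /K; lia.
  by rewrite -{1}(expn1 (hside n)) leq_pexp2l //; lia.
have max_ge := hgraph_max_cliques_ge (hvertex_fits n) m_gt1.
rewrite card_hvertex in max_ge; split.
  by apply: leq_trans max_ge; rewrite muln_gt0 q_gt0 (leq_trans q_gt0 q_le).
have := hgraph_covered_le g m_gt1 n_gt0 P_part P_dense; rewrite card_hvertex => cov_le.
by apply: leq_trans max_ge; apply: covered_count_arith n_lt q_le Z_le _ _ _ cov_le;
  rewrite /K in K_le; lia.
Qed.

Lemma mul2_bin2 c : 2 * 'C(c, 2) = c * c.-1.
Proof.
by elim: c => // c IHc; rewrite binS bin1 mulnDr IHc; case: c {IHc} => //= c; lia.
Qed.

Local Open Scope R_scope.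

Lemma exists_nat_mul_gt1 (d : R) : 0 < d -> exists h : nat, 1 < d * INR h.
Proof.
move=> d_gt0; have [h [h_lt /ltP h_gt0]] := archimed_cor1 d d_gt0.
exists h; have INR_h_gt0 : 0 < INR h by apply/lt_0_INR/ltP.
have := Rmult_lt_compat_r _ _ _ INR_h_gt0 h_lt.
by rewrite Rinv_l //; lra.
Qed.

Lemma INR_leq (a b : nat) : INR a <= INR b -> (a <= b)%N.
Proof. by move/INR_le => /leP. Qed.

Lemma density_pairs_le n (E : rel 'I_n) (d : R) (h : nat) (C : {set 'I_n}) :
  symmetric E -> irreflexive E -> 1 < d * INR h -> d <= density E C ->
  (#|C| * #|C|.-1 <= h * deg_sum E C)%N.
Proof.
move=> E_sym E_irr dh; rewrite /density; case: ifP => C_ge2 C_dense; last first.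
  by case: #|C| C_ge2 => [|[|]].
have bin_gt0 : 0 < INR 'C(#|C|, 2) by apply/lt_0_INR/ltP; rewrite bin_gt0.
have edges_ge : d * INR 'C(#|C|, 2) <= INR (n_edges_in E C).
  have := Rmult_le_compat_r _ _ _ (Rlt_le _ _ bin_gt0) C_dense.
  by rewrite /Rdiv Rmult_assoc Rinv_l ?Rmult_1_r //; lra.
have : INR 'C(#|C|, 2) <= INR (n_edges_in E C * h).
  by rewrite mult_INR; have := pos_INR h; nra.
move/INR_leq => /(leq_mul (leqnn 2)).
by rewrite mul2_bin2 mulnA (n_edges_in_double E_sym E_irr) [X in (_ <= X)%N]mulnC.
Qed.

Lemma leq_mul_of_Rleb (ga : R) (g d a : nat) :
  1 < ga * INR g -> Rleb (ga * INR d) (INR a) = true -> (d <= g * a)%N.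
Proof.
rewrite /Rleb => ga_g; case: Rle_dec => // ga_d _; apply: INR_leq.
rewrite mult_INR; have := pos_INR d; have := pos_INR a; have := pos_INR g; nra.
Qed.

Lemma Rdiv_lt_of_mul_le (a b Z : nat) (eps : R) :
  (0 < b)%N -> (a * Z <= b)%N -> 1 < eps * INR Z -> INR a / INR b < eps.
Proof.
move=> /ltP /lt_0_INR b_gt0 /leP /le_INR; rewrite mult_INR => aZ_le eps_Z.
apply: (Rmult_lt_reg_r (INR b)) => //.
rewrite /Rdiv Rmult_assoc Rinv_l ?Rmult_1_r; last by lra.
have eps_gt0 : 0 < eps by have := pos_INR Z; nra.
have : eps * (INR a * INR Z) <= eps * INR b by apply: Rmult_le_compat_l; lra.
have [-> | a_gt0] : INR a = 0 \/ 0 < INR a by have := pos_INR a; lra.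
all: nra.
Qed.

Theorem theorem4p2 :
  exists (N0 : nat) (E : forall n : nat, rel 'I_n),
    (forall n : nat, (N0 <= n)%N -> irreflexive (E n) /\ symmetric (E n)) /\
    forall delta gamma : R, (0 < delta)%R -> (0 < gamma)%R ->
    forall P : forall n : nat, {set {set 'I_n}},
      (forall n : nat, (N0 <= n)%N ->
         partition (P n) [set: 'I_n] /\
         (forall C : {set 'I_n}, C \in P n -> (delta <= density (E n) C)%R)) ->
      forall eps : R, (0 < eps)%R ->
        exists N : nat, forall n : nat, (N <= n)%N ->
          (frac_covered (E n) (P n) gamma < eps)%R.
Proof.
exists 0%N, hgraph_seq; split => [n _ | d ga d_gt0 ga_gt0 P P_ok eps eps_gt0].
  by split; [exact: hgraph_irr | exact: hgraph_sym].
have [h d_h] := exists_nat_mul_gt1 d_gt0.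
have [g ga_g] := exists_nat_mul_gt1 ga_gt0.
have [Z eps_Z] := exists_nat_mul_gt1 eps_gt0.
have [N covered_le] := hgraph_seq_covered_le g h Z.
exists N => n n_ge; have [P_part P_dense] := P_ok n (leq0n n).
have [max_gt0 cov_le] := covered_le n n_ge (P n) P_part
  (fun C CP => density_pairs_le (hgraph_sym _) (hgraph_irr _) d_h (P_dense C CP)).
apply: Rdiv_lt_of_mul_le max_gt0 (leq_trans _ cov_le) eps_Z.
rewrite leq_mul2r; apply/orP; right; apply: subset_leq_card; apply/subsetP => D.
rewrite !inE => /andP [-> /existsP [C /andP [CP cover]]].
by apply/existsP; exists C; rewrite CP (leq_mul_of_Rleb ga_g cover).
Qed.
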